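(* Let $G$ and $N$ be finite groups of the same order, let $\mathfrak{f}:G\to\mathrm{Aut}(N)$ be a homomorphism and let $\mathfrak{g}:G\to N$ be a bijective map such that $\mathfrak{g}(\sigma\tau)=\mathfrak{g}(\sigma)\cdot\mathfrak{f}(\sigma)(\mathfrak{g}(\tau))$ for all $\sigma,\tau\in G$. Let $M$ be any characteristic subgroup of $N$, and let $\theta_M:\mathrm{Aut}(N)\to\mathrm{Aut}(N/M)$, $\theta_M(\varphi)(\eta M)=\varphi(\eta)M$, be the natural homomorphism. Define $H=\mathfrak{g}^{-1}(M)$. Then $H$ is a subgroup of $G$ and $\mathcal{E}'(H,M)$ is non-empty. Moreover, if $N/M$ is solvable and $\ker(\theta_M\circ\mathfrak{f})$ is insolvable, then $H$ is insolvable.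
   Context: For a finite group $M$, let $\mathrm{Perm}(M)$ be the group of all permutations of the set $M$. A subgroup $\mathcal{G}\le \mathrm{Perm}(M)$ is regular if the map $\mathcal{G}\to M$, $\sigma\mapsto\sigma(1_M)$, is bijective. Let $\rho:M\to\mathrm{Perm}(M)$, $\rho(\eta)(x)=x\eta^{-1}$. The holomorph of $M$ is $\mathrm{Hol}(M)=\rho(M)\rtimes\mathrm{Aut}(M)\le\mathrm{Perm}(M)$. For a group $H$ with $|H|=|M|$, $\mathcal{E}'(H,M)$ denotes the set of regular subgroups of $\mathrm{Hol}(M)$ isomorphic to $H$. *)

From mathcomp Require Import all_boot all_fingroup nilpotent.
Set Implicit Arguments. Unset Strict Implicit. Unset Printing Implicit Defensive.
Local Open Scope group_scope.

(* The permutation group Perm(M) of the (underlying set of the) group M is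
   {perm subg_of M}, where subg_of M is the finGroupType of elements of M. *)

Section Holomorph.
Variables (nT : finGroupType) (M : {group nT}).

Definition hol_rho (eta : subg_of M) : {perm subg_of M} :=
  perm (mulIg eta^-1).

Definition Hol : {set {perm subg_of M}} :=
  (hol_rho @: [set: subg_of M]) * Aut [set: subg_of M].

Definition regular (X : {set {perm subg_of M}}) : Prop :=
  {in X &, injective (fun s : {perm subg_of M} => s 1)} /\
  (fun s : {perm subg_of M} => s 1) @: X = [set: subg_of M].

Definition Eprime (hT : finGroupType) (H : {set hT})
    (X : {group {perm subg_of M}}) : Prop :=
  X \subset Hol /\ regular X /\ (X \isog H).
End Holomorph.

Arguments Eprime {nT} M {hT} H X.
Arguments regular {nT} M X.

Definition theta (nT : finGroupType) (M : {set nT}) (phi : {perm nT})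
    (C : coset_of M) : coset_of M := coset M (phi (repr C)).

Arguments theta {nT} M phi C.

Definition ker_theta_f (gT nT : finGroupType) (G : {set gT}) (N M : {set nT})
    (f : gT -> {perm nT}) : {set gT} :=
  [set s in G | [forall C in N / M, theta M (f s) C == C]].

From mathcomp Require Import all_boot all_fingroup nilpotent.

(* For s in H = g^-1(M), the permutation x |-> f(s)^-1 (x g(s)) of M is a
   right translation followed by the automorphism f(s)^-1, which preserves the
   characteristic subgroup M, so it lies in Hol(M); the cocycle identity makes
   this assignment a morphism.  It sends 1 to g(s^-1)^-1, which determines s
   since g is injective, and every point of M is reached since g is onto N:
   the image is a regular subgroup isomorphic to H.
   The elements of G acting trivially on N/M form a subgroup K containing
   ker(theta_M o f), and s |-> g(s)M is a morphism K -> N/M with kernel in H,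
   so K is solvable as soon as N/M and H are. *)

Set Implicit Arguments.
Unset Strict Implicit.
Unset Printing Implicit Defensive.
Local Open Scope group_scope.

Lemma solvable_setS (gT : finGroupType) (A B : {set gT}) :
  A \subset B -> solvable B -> solvable A.
Proof.
move=> sAB solB; apply/forall_inP=> K /subsetIP[sKA sKK'].
by rewrite (forall_inP solB) // subsetI (subset_trans sKA).
Qed.

Lemma sol_ker_morphim (aT rT : finGroupType) (K : {group aT})
    (phi : {morphism K >-> rT}) :
  solvable ('ker phi) -> solvable (phi @* K) -> solvable K.
Proof.
move=> solKer solIm.
by rewrite (series_sol (ker_normal phi)) solKer (isog_sol (first_isog phi)).
Qed.

Lemma char_Aut_closed (gT : finGroupType) (M N : {group gT}) a x :
  M \char N -> a \in Aut N -> x \in M -> a x \in M.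
Proof.
case/andP=> _ /forall_inP charMN Aa Mx.
by apply: (subsetP (charMN a Aa)); apply: imset_f.
Qed.

Lemma Aut_morphV (gT : finGroupType) (N : {group gT}) a x :
  a \in Aut N -> x \in N -> a x^-1 = (a x)^-1.
Proof. by move=> Aa Nx; have := morphV (autm Aa) Nx; rewrite !autmE. Qed.

(* The identity stands in for F when F is not injective. *)
Definition perm_of (T : finType) (F : T -> T) : {perm T} :=
  if injectiveP F is ReflectT Finj then perm Finj else 1.

Lemma perm_ofE (T : finType) (F : T -> T) : injective F -> perm_of F =1 F.
Proof.
by rewrite /perm_of; case: injectiveP => [Finj _ x|//]; rewrite permE.
Qed.

Section AutSubg.
Variables (nT : finGroupType) (M N : {group nT}).
Hypothesis charM : M \char N.

Definition aut_subg (a : {perm nT}) : {perm subg_of M} :=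
  perm_of (fun u : subg_of M => subg M (a (val u))).

Lemma aut_subgE a u : a \in Aut N -> val (aut_subg a u) = a (val u).
Proof.
move=> Aa; have aM (v : subg_of M) : a (val v) \in M.
  exact: char_Aut_closed charM Aa (subgP v).
rewrite /aut_subg perm_ofE ?subgK //.
by move=> v w /(congr1 val); rewrite !subgK // => /perm_inj /val_inj.
Qed.

Lemma aut_subg_Aut a : a \in Aut N -> aut_subg a \in Aut [set: subg_of M].
Proof.
move=> Aa; rewrite inE; apply/andP; split.
  by apply/subsetP=> u _; rewrite inE.
apply/morphicP=> u v _ _; apply: val_inj.
rewrite /= !aut_subgE //; apply: (morphicP (Aut_morphic Aa)) => //.
  exact: subsetP (char_sub charM) _ (subgP u).
exact: subsetP (char_sub charM) _ (subgP v).
Qed.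

End AutSubg.

Lemma hol_rhoE (nT : finGroupType) (M : {group nT}) (eta u : subg_of M) :
  hol_rho eta u = u * eta^-1.
Proof. by rewrite permE. Qed.

Lemma mem_Hol (nT : finGroupType) (M : {group nT}) (eta : subg_of M) a :
  a \in Aut [set: subg_of M] -> hol_rho eta * a \in Hol M.
Proof. by move=> Aa; rewrite mem_mulg // imset_f ?inE. Qed.

Section CrossedHomomorphism.
Variables (gT nT : finGroupType) (G : {group gT}) (N : {group nT}).
Variables (f : {morphism G >-> {perm nT}}) (g : gT -> nT).
Hypotheses (fG_Aut : f @* G \subset Aut N) (gG : g @: G = N).
Hypothesis g_cocycle : {in G &, forall s t, g (s * t) = g s * f s (g t)}.

Lemma f_Aut s : s \in G -> f s \in Aut N.
Proof. by move=> Gs; apply: (subsetP fG_Aut); apply: mem_morphim. Qed.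

Lemma fV_Aut s : s \in G -> (f s)^-1 \in Aut N.
Proof. by move=> Gs; rewrite (@groupV _ [Aut N]) f_Aut. Qed.

Lemma f_morphM s : s \in G -> {in N &, {morph f s : x y / x * y}}.
Proof. by move/f_Aut/Aut_morphic/morphicP. Qed.

Lemma cocycle_mem s : s \in G -> g s \in N.
Proof. by move=> Gs; rewrite -gG imset_f. Qed.

Lemma cocycle1 : g 1 = 1.
Proof.
have := g_cocycle (group1 G) (group1 G); rewrite mulg1 morph1 perm1.
by move/(congr1 (fun x => (g 1)^-1 * x)); rewrite mulKg mulVg.
Qed.

(* The product of {perm nT} is composition in diagrammatic order, so the
   morphism law of f does not give this; it comes from associativity in G
   via the cocycle identity, g being onto N. *)
Lemma cocycle_actM s t x :
  s \in G -> t \in G -> x \in N -> f (s * t) x = f s (f t x).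
Proof.
move=> Gs Gt; rewrite -gG => /imsetP[r Gr ->].
have Nft : f t (g r) \in N by rewrite (Aut_closed (f_Aut Gt)) ?cocycle_mem.
have := g_cocycle Gs (groupM Gt Gr).
rewrite mulgA (g_cocycle (groupM Gs Gt) Gr) (g_cocycle Gs Gt) (g_cocycle Gt Gr).
by rewrite f_morphM ?cocycle_mem // -!mulgA => /mulgI/mulgI.
Qed.

Lemma cocycleV s : s \in G -> g s^-1 = ((f s)^-1 (g s))^-1.
Proof.
move=> Gs; have := g_cocycle Gs (groupVr Gs).
rewrite mulgV cocycle1 => /(congr1 (fun x => (g s)^-1 * x)).
rewrite mulKg mulg1 => fsgV.
by rewrite -(Aut_morphV (fV_Aut Gs) (cocycle_mem Gs)) fsgV permK.
Qed.

Variable M : {group nT}.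
Hypothesis charM : M \char N.

Definition cocycle_preim := G :&: g @^-1: M.

Lemma cocycle_preimP s : reflect (s \in G /\ g s \in M) (s \in cocycle_preim).
Proof. by rewrite !inE; apply: andP. Qed.

Lemma group_set_cocycle_preim : group_set cocycle_preim.
Proof.
apply/group_setP; split; first by apply/cocycle_preimP; rewrite cocycle1.
move=> s t /cocycle_preimP[Gs Ms] /cocycle_preimP[Gt Mt].
apply/cocycle_preimP; rewrite groupM // g_cocycle // groupM //.
exact: char_Aut_closed charM (f_Aut Gs) Mt.
Qed.

Canonical cocycle_preim_group := Group group_set_cocycle_preim.

Definition hol_embed s : {perm subg_of M} :=
  hol_rho (subg M (g s)^-1) * aut_subg M (f s)^-1.

Lemma hol_embedE s u :
  s \in cocycle_preim -> val (hol_embed s u) = (f s)^-1 (val u * g s).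
Proof.
case/cocycle_preimP=> Gs Ms.
by rewrite permM (aut_subgE charM) ?fV_Aut // hol_rhoE /= subgK ?groupV ?invgK.
Qed.

Lemma hol_embed1 s : s \in cocycle_preim -> val (hol_embed s 1) = (g s^-1)^-1.
Proof.
move=> Hs; have /cocycle_preimP[Gs _] := Hs.
by rewrite hol_embedE //= mul1g cocycleV // invgK.
Qed.

Lemma hol_embedM : {in cocycle_preim &, {morph hol_embed : s t / s * t}}.
Proof.
move=> s t Hs Ht.
have /cocycle_preimP[Gs _] := Hs; have /cocycle_preimP[Gt _] := Ht.
apply/permP=> u; apply: val_inj; rewrite permM !hol_embedE ?groupM //.
have Nfu : (f s)^-1 (val u * g s) \in N.
  rewrite (Aut_closed (fV_Aut Gs)) ?groupM ?cocycle_mem //.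
  exact: subsetP (char_sub charM) _ (subgP u).
apply: (@perm_inj _ (f (s * t))).
rewrite permKV cocycle_actM ?groupM //; last first.
  by rewrite (Aut_closed (fV_Aut Gt)) ?groupM ?cocycle_mem.
by rewrite permKV f_morphM ?cocycle_mem // permKV g_cocycle // mulgA.
Qed.

Canonical hol_embed_morphism := Morphism hol_embedM.

Hypothesis g_inj : {in G &, injective g}.

Lemma hol_embed1_inj : {in cocycle_preim &, injective (fun s => hol_embed s 1)}.
Proof.
move=> s t Hs Ht /(congr1 val); rewrite !hol_embed1 // => /invg_inj.
have /cocycle_preimP[Gs _] := Hs; have /cocycle_preimP[Gt _] := Ht.
by move/g_inj; rewrite !groupV => /(_ Gs Gt)/invg_inj.
Qed.

Lemma injm_hol_embed : 'injm hol_embed_morphism.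
Proof.
by apply/injmP=> s t Hs Ht /= st; apply: hol_embed1_inj; rewrite // st.
Qed.

Lemma hol_embed_Hol : hol_embed_morphism @* cocycle_preim \subset Hol M.
Proof.
apply/subsetP=> _ /morphimP[s _ Hs ->]; have /cocycle_preimP[Gs _] := Hs.
by rewrite mem_Hol // (aut_subg_Aut charM) ?fV_Aut.
Qed.

Lemma regular_hol_embed : regular M (hol_embed_morphism @* cocycle_preim).
Proof.
split=> [_ _ /morphimP[s _ Hs ->] /morphimP[t _ Ht ->] /= st|].
  by rewrite (hol_embed1_inj Hs Ht st).
apply/setP=> u; rewrite in_setT; apply/imsetP.
have: (val u)^-1 \in N by rewrite groupV (subsetP (char_sub charM)) ?subgP.
rewrite -gG => /imsetP[r Gr gr].
have Hr : r \in cocycle_preim by apply/cocycle_preimP; rewrite -gr groupV subgP.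
exists (hol_embed r^-1); first by rewrite mem_morphim ?groupV.
by apply: val_inj; rewrite hol_embed1 ?groupV // invgK -gr invgK.
Qed.

Lemma Eprime_hol_embed :
  Eprime M cocycle_preim (hol_embed_morphism @* cocycle_preim)%G.
Proof.
split; [exact: hol_embed_Hol | split; first exact: regular_hol_embed].
exact: isog_symr (sub_isog (subxx _) injm_hol_embed).
Qed.

Definition coset_fixer :=
  [set s in G | [forall x in N, coset M (f s x) == coset M x]].

Lemma coset_fixerP s :
  reflect (s \in G /\ {in N, forall x, coset M (f s x) = coset M x})
          (s \in coset_fixer).
Proof.
rewrite inE; apply: (iffP andP) => -[Gs fixNM]; split=> //.
  by move=> x Nx; apply/eqP/(forall_inP fixNM).
by apply/forall_inP=> x Nx; rewrite fixNM.
Qed.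

Lemma group_set_coset_fixer : group_set coset_fixer.
Proof.
apply/group_setP; split.
  by apply/coset_fixerP; split=> // x _; rewrite morph1 perm1.
move=> s t /coset_fixerP[Gs fixs] /coset_fixerP[Gt fixt].
apply/coset_fixerP; split=> [|x Nx]; first exact: groupM.
by rewrite cocycle_actM // fixs ?fixt // (Aut_closed (f_Aut Gt)).
Qed.

Canonical coset_fixer_group := Group group_set_coset_fixer.

Lemma ker_theta_f_sub : ker_theta_f G N M f \subset coset_fixer.
Proof.
apply/subsetP=> s; rewrite inE => /andP[Gs /forall_inP fixNM].
apply/coset_fixerP; split=> // x Nx.
have nMN := char_norm charM.
have /eqP <- := fixNM _ (mem_quotient M Nx); rewrite /theta.
have /rcosetP[m Mm ->] : repr (coset M x) \in M :* x.
  by rewrite -val_coset ?(subsetP nMN) // mem_repr_coset.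
have Nm := subsetP (char_sub charM) _ Mm.
by rewrite f_morphM // coset_kerl // (char_Aut_closed charM (f_Aut Gs)).
Qed.

Lemma coset_cocycleM :
  {in coset_fixer &, {morph (fun s => coset M (g s)) : s t / s * t}}.
Proof.
move=> s t /coset_fixerP[Gs fixs] /coset_fixerP[Gt _] /=.
have nMN := subsetP (char_norm charM).
have Ngt := cocycle_mem Gt.
rewrite g_cocycle // morphM ?nMN ?cocycle_mem ?(Aut_closed (f_Aut Gs)) //=.
by rewrite fixs.
Qed.

Definition coset_cocycle := Morphism coset_cocycleM.

Lemma ker_coset_cocycle : 'ker coset_cocycle \subset cocycle_preim.
Proof.
apply/subsetP=> s Ks; have /coset_fixerP[Gs _] := dom_ker Ks.
apply/cocycle_preimP; split=> //; apply: coset_idr (mker Ks).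
exact: subsetP (char_norm charM) _ (cocycle_mem Gs).
Qed.

Lemma im_coset_cocycle : coset_cocycle @* coset_fixer \subset N / M.
Proof.
apply/subsetP=> _ /morphimP[s _ /coset_fixerP[Gs _] ->].
exact/mem_quotient/cocycle_mem.
Qed.

Lemma sol_coset_fixer :
  solvable (N / M) -> solvable cocycle_preim -> solvable coset_fixer.
Proof.
move=> solNM solH; apply: sol_ker_morphim coset_cocycle _ _.
  exact: solvableS ker_coset_cocycle solH.
exact: solvableS im_coset_cocycle solNM.
Qed.

End CrossedHomomorphism.

Theorem proposition3p3 (gT nT : finGroupType) (G : {group gT}) (N M : {group nT})
    (f : {morphism G >-> {perm nT}}) (g : gT -> nT) :
  #|G| = #|N| ->
  f @* G \subset Aut N ->
  {in G &, injective g} -> g @: G = N ->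
  {in G &, forall s t, g (s * t) = g s * f s (g t)} ->
  M \char N ->
  let H := G :&: g @^-1: M in
  [/\ group_set H,
      exists X : {group {perm subg_of M}}, Eprime M H X
    & solvable (N / M) -> ~~ solvable (ker_theta_f G N M f) -> ~~ solvable H].
Proof.
(* The order hypothesis is implied by the bijectivity of g. *)
move=> _ fG_Aut g_inj gG g_cocycle charM H; split.
- exact: (group_set_cocycle_preim fG_Aut g_cocycle charM).
- by eexists; apply: (Eprime_hol_embed fG_Aut gG g_cocycle charM g_inj).
move=> solNM; apply: contra => solH.
apply: solvable_setS (ker_theta_f_sub fG_Aut charM) _.
exact: (sol_coset_fixer fG_Aut gG g_cocycle charM solNM solH).
Qed.
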